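(* Let $(X,\mathcal U)$ be a non-archimedean metrizable non-discrete uniform space. Then $A_{NA}(X,\mathcal U)$ is not complete.
   Context: A uniform space is non-archimedean if its (Hausdorff) uniformity has a base of equivalence relations; it is discrete if the diagonal is an entourage. $A_{NA}(X,\mathcal U)$ is the free abelian non-archimedean group of $(X,\mathcal U)$: an abelian Hausdorff topological group with a local base at $0$ of open subgroups, together with a uniformly continuous map $i\colon X\to A_{NA}$ such that every uniformly continuous map from $X$ into an abelian non-archimedean group factors uniquely as a continuous homomorphism composed with $i$. Complete means complete with respect to the group's uniformity. *)

From HB Require Import structures.
From mathcomp Require Import all_boot all_order all_algebra.
From mathcomp Require Import all_classical all_reals all_analysis.
Set Implicit Arguments. Unset Strict Implicit. Unset Printing Implicit Defensive.
Import Order.TTheory GRing.Theory Num.Theory.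
Local Open Scope classical_set_scope.
Local Open Scope ring_scope.

Definition equiv_rel_set {T : Type} (E : set (T * T)) : Prop :=
  [/\ forall x, E (x, x),
      forall x y, E (x, y) -> E (y, x) &
      forall x y z, E (x, y) -> E (y, z) -> E (x, z)].

Definition nonarch_uniform (X : uniformType) : Prop :=
  forall E : set (X * X), entourage E ->
    exists2 F : set (X * X), entourage F /\ equiv_rel_set F & F `<=` E.

Definition discrete_uniform (X : uniformType) : Prop :=
  entourage (@diagonal X).

Definition metrizable_uniform (X : uniformType) : Prop :=
  hausdorff_space X /\ countable_uniformity X.

Definition is_subgroup (G : zmodType) (V : set G) : Prop :=
  V 0 /\ forall x y, V x -> V y -> V (x - y).

Definition nonarch_group (G : topologicalZmodType) : Prop :=
  hausdorff_space G /\
  forall U : set G, nbhs (0 : G) U ->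
    exists2 V : set G, open V /\ is_subgroup V & V `<=` U.

(** Uniform continuity of a map from a uniform space into an abelian
    topological group equipped with its group uniformity
    { (a, b) | b - a \in U }, U a neighbourhood of 0. *)
Definition unif_cont_to_group (X : uniformType) (G : topologicalZmodType)
    (f : X -> G) : Prop :=
  forall U : set G, nbhs (0 : G) U ->
    exists2 E : set (X * X), entourage E &
      forall x y, E (x, y) -> U (f y - f x).

Definition group_cauchy (G : topologicalZmodType) (F : set_system G) : Prop :=
  forall U : set G, nbhs (0 : G) U ->
    exists2 A : set G, F A & forall x y, A x -> A y -> U (y - x).

Definition group_complete (G : topologicalZmodType) : Prop :=
  forall F : set_system G, ProperFilter F -> group_cauchy F ->
    exists g : G, F --> g.

Definition is_free_NA_group (X : uniformType) (G : topologicalZmodType)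
    (i : X -> G) : Prop :=
  [/\ nonarch_group G,
      unif_cont_to_group i &
      forall (H : topologicalZmodType) (f : X -> H),
        nonarch_group H -> unif_cont_to_group f ->
        exists! g : G -> H,
          [/\ continuous g, (forall a b, g (a + b) = g a + g b) &
              forall x, g (i x) = f x]].

(* Suppose A_NA(X) were complete.  Metrizability and non-discreteness give a
   decreasing base U_n of equivalence entourages and pairs U_n(a_n, b_n) such
   that no a_j lies in the U_(n+1)-class of b_n: take a_n = c for a
   non-isolated point c, or, if every point is isolated, pairs of isolated
   points.  These classes are pairwise disjoint, so the map sending the class of
   b_n to 3^n and everything else to 0 is uniformly continuous into the integers
   with the 3-adic topology, a non-archimedean group.  The partial sums of
   i(b_n) - i(a_n) form a Cauchy sequence in A_NA(X); the induced continuous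
   homomorphism maps them to the partial sums of sum 3^n, which would then
   converge 3-adically to an integer, whereas their limit is -1/2. *)

From HB Require Import structures.
From mathcomp Require Import all_boot all_order all_algebra.
From mathcomp Require Import all_classical all_reals all_analysis.
From mathcomp Require Import ring zify.
Set Implicit Arguments. Unset Strict Implicit. Unset Printing Implicit Defensive.
Import Order.TTheory GRing.Theory Num.Theory.
Local Open Scope classical_set_scope.
Local Open Scope ring_scope.

Definition padic_int (p : nat) : Type := int.

Section PadicTopology.
Variable p : nat.
Local Notation Zp := (padic_int p).

HB.instance Definition _ := GRing.Zmodule.on Zp.

Definition padic_ball (k : nat) (x : Zp) : set Zp :=
  [set y | (p%:Z ^+ k %| y - x)%Z].

Lemma padic_ball_center k x : padic_ball k x x.
Proof. by rewrite /padic_ball /= subrr dvdz0. Qed.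

Lemma padic_ball_sym k x y : padic_ball k x y -> padic_ball k y x.
Proof. by rewrite /padic_ball /= -opprB rpredN. Qed.

Lemma padic_ball_trans k x y z :
  padic_ball k x y -> padic_ball k y z -> padic_ball k x z.
Proof. by move=> xy yz; rewrite /padic_ball /= -(subrK y z) -addrA rpredD. Qed.

Lemma padic_ball_le k l x : (k <= l)%N -> padic_ball l x `<=` padic_ball k x.
Proof. by move=> kl y; apply: dvdz_trans; apply: dvdz_exp2l. Qed.

Definition padic_nbhs (x : Zp) (A : set Zp) : Prop :=
  exists k, padic_ball k x `<=` A.

HB.instance Definition _ := hasNbhs.Build Zp padic_nbhs.

Lemma padic_nbhs_filter x : ProperFilter (padic_nbhs x).
Proof.
apply: Build_ProperFilter_ex.
  by move=> A [k kA]; exists x; apply/kA/padic_ball_center.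
split; first by exists 0%N.
- move=> A B [k kA] [l lB]; exists (maxn k l) => y xy; split.
    by apply/kA/(padic_ball_le (leq_maxl k l)).
  by apply/lB/(padic_ball_le (leq_maxr k l)).
- by move=> A B AB [k kA]; exists k => y /kA /AB.
Qed.

Lemma padic_nbhs_singleton x A : padic_nbhs x A -> A x.
Proof. by move=> [k kA]; apply/kA/padic_ball_center. Qed.

Lemma padic_nbhs_nbhs x A : padic_nbhs x A -> padic_nbhs x (padic_nbhs^~ A).
Proof.
move=> [k kA]; exists k => y xy; exists k => z yz.
exact/kA/(padic_ball_trans xy).
Qed.

HB.instance Definition _ := Nbhs_isNbhsTopological.Build Zp
  padic_nbhs_filter padic_nbhs_singleton padic_nbhs_nbhs.

Lemma padic_sub_continuous : continuous (fun x : Zp * Zp => x.1 - x.2).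
Proof.
move=> [x y] A /= [k kA]; exists (padic_ball k x, padic_ball k y).
  by split; exists k.
move=> [x' y'] [/= xx' yy']; apply: kA; rewrite /padic_ball /=.
have -> : x' - y' - (x - y) = (x' - x) - (y' - y) :> int by ring.
exact: rpredB.
Qed.

HB.instance Definition _ :=
  PreTopologicalNmodule_isTopologicalZmodule.Build Zp padic_sub_continuous.

Hypothesis p_gt1 : (1 < p)%N.

Lemma padic_eq0 (x : Zp) : (forall k, (p%:Z ^+ k %| x)%Z) -> x = 0.
Proof.
move=> dvdx; apply/eqP; apply: contraT => x_neq0.
have := dvdx `|x|%N; rewrite dvdzE abszX => /dvdn_leq.
by rewrite absz_gt0 x_neq0 leqNgt ltn_expl // => /(_ isT).
Qed.

Lemma padic_hausdorff : hausdorff_space Zp.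
Proof.
move=> x y xy; apply/eqP; rewrite eq_sym -subr_eq0; apply/eqP/padic_eq0 => k.
have ball_nbhs z : nbhs z (padic_ball k z) by exists k.
have [w [xw yw]] := xy _ _ (ball_nbhs x) (ball_nbhs y).
exact: padic_ball_trans xw (padic_ball_sym yw).
Qed.

Lemma padic_nonarch : nonarch_group Zp.
Proof.
split; first exact: padic_hausdorff.
move=> A [k kA]; exists (padic_ball k 0) => //; split.
  rewrite openE => y /= y0; exists k => z /= yz; exact: padic_ball_trans y0 yz.
split; first exact: padic_ball_center.
by move=> x y; rewrite /padic_ball /= !subr0; apply: rpredB.
Qed.

End PadicTopology.

(* The p-adic limit of the series is 1 / (1 - p), not an integer when p > 2. *)
Lemma padic_geometric_sum_not_cvg (p : nat) (L : padic_int p) : (2 < p)%N ->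
  ~ ((fun n => \sum_(m < n) p%:Z ^+ m : padic_int p) @ \oo --> L).
Proof.
move=> p_gt2 sum_cvg; have p_gt1 : (1 < p)%N by apply: ltnW.
suff : (p%:Z - 1) * L + 1 = 0 by have [L_lt0|L_ge0] := ltP (L : int) 0; nia.
apply: (padic_eq0 p_gt1) => k.
have [N _ nearL] := sum_cvg (padic_ball k L) (ex_intro _ k (@subset_refl _ _)).
have /= sumNL := nearL _ (leq_maxl N k).
have -> : (p%:Z - 1) * L + 1 = p%:Z ^+ maxn N k -
    (p%:Z - 1) * (\sum_(m < maxn N k) p%:Z ^+ m - L).
  by rewrite mulrBr -subrX1; ring.
by rewrite rpredB ?dvdz_mull // dvdz_exp2l ?leq_maxr.
Qed.

Lemma additive_fun0 (V W : zmodType) (g : V -> W) :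
  (forall x y, g (x + y) = g x + g y) -> g 0 = 0.
Proof. by move=> gD; apply: (@addrI _ (g 0)); rewrite -gD !addr0. Qed.

Lemma additive_funB (V W : zmodType) (g : V -> W) :
  (forall x y, g (x + y) = g x + g y) -> forall x y, g (x - y) = g x - g y.
Proof.
by move=> gD x y; apply: (@addIr _ (g y)); rewrite -gD !subrK.
Qed.

Lemma is_subgroupD (V : zmodType) (A : set V) :
  is_subgroup A -> forall x y, A x -> A y -> A (x + y).
Proof.
move=> [A0 AB] x y Ax Ay; have -> : x + y = x - (0 - y) by rewrite sub0r opprK.
by apply: (AB) => //; apply: AB.
Qed.

Lemma decreasing_sets_le (T : Type) (U : nat -> set T) :
  (forall n, U n.+1 `<=` U n) -> forall m n, (m <= n)%N -> U n `<=` U m.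
Proof.
move=> U_decr m n /subnK <-; elim: (n - m)%N => [//|d IH].
by rewrite addSn => z /U_decr /IH.
Qed.

Definition far_sequence (X : uniformType) (U : nat -> set (X * X)) (a b : nat -> X) :=
  [/\ forall n, entourage (U n) /\ equiv_rel_set (U n),
      forall n, U n.+1 `<=` U n,
      forall E, entourage E -> exists n, U n `<=` E,
      forall n, U n (a n, b n) &
      forall j m, ~ U m.+1 (b m, a j)].

Section FarSequence.
Variables (X : uniformType) (U : nat -> set (X * X)) (a b : nat -> X).
Hypothesis far : far_sequence U a b.

Let U_equiv n : equiv_rel_set (U n). Proof. by case: far => /(_ n)[]. Qed.
Let U_sym n x y : U n (x, y) -> U n (y, x).
Proof. by case: (U_equiv n) => _ sym _; apply: sym. Qed.
Let U_trans n x y z : U n (x, y) -> U n (y, z) -> U n (x, z).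
Proof. by case: (U_equiv n) => _ _ tr; apply: tr. Qed.
Let U_le : forall m n, (m <= n)%N -> U n `<=` U m.
Proof. by case: far => _ /decreasing_sets_le. Qed.

Lemma far_balls_disjoint m m' x : U m.+1 (b m, x) -> U m'.+1 (b m', x) -> m = m'.
Proof.
have sep k k' y : (k < k')%N -> U k.+1 (b k, y) -> ~ U k'.+1 (b k', y).
  move=> kk' bk bk'.
  have bk'_ak' : U k.+1 (b k', a k') by apply/U_sym/(U_le kk'); case: far.
  have bk'_y : U k.+1 (b k', y) by apply: (U_le (leqW kk')).
  by case: far => _ _ _ _ /(_ k' k); apply; apply: U_trans (U_trans bk (U_sym bk'_y)) _.
move=> bm bm'; case: (ltngtP m m') => // [mm'|m'm].
  by case: (sep _ _ _ mm' bm).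
by case: (sep _ _ _ m'm bm').
Qed.

Definition far_weight (p : nat) (x : X) : padic_int p :=
  if pselect (exists m, U m.+1 (b m, x)) is left ex then p%:Z ^+ projT1 (cid ex)
  else 0.

Variable p : nat.

Lemma far_weight_ball m x : U m.+1 (b m, x) -> far_weight p x = p%:Z ^+ m.
Proof.
move=> bm; rewrite /far_weight; case: pselect => [ex|]; last by case; exists m.
by case: cid => m' /= bm'; rewrite (far_balls_disjoint bm' bm).
Qed.

Lemma far_weight_b m : far_weight p (b m) = p%:Z ^+ m.
Proof. by apply: far_weight_ball; case: (U_equiv m.+1). Qed.

Lemma far_weight_a j : far_weight p (a j) = 0.
Proof.
rewrite /far_weight; case: pselect => // -[m bm].
by case: far => _ _ _ _ /(_ j m).
Qed.

Lemma far_weight_dvd_or_ball k x :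
  (exists2 m, (m < k)%N & U m.+1 (b m, x)) \/ (p%:Z ^+ k %| far_weight p x)%Z.
Proof.
have [[m bm]|] := pselect (exists m, U m.+1 (b m, x)); last first.
  by rewrite /far_weight; case: pselect => // _ _; right; apply: dvdz0.
have [mk|km] := ltnP m k; first by left; exists m.
by right; rewrite (far_weight_ball bm) dvdz_exp2l.
Qed.

Lemma far_weight_uniform : unif_cont_to_group (far_weight p).
Proof.
move=> W [k kW]; exists (U k); first by case: far => /(_ k)[].
move=> x y xy; apply: kW; rewrite /padic_ball /= subr0.
have [[m mk bm]|dvdx] := far_weight_dvd_or_ball k x.
  have bm_y : U m.+1 (b m, y) by apply: U_trans bm (U_le mk xy).
  by rewrite (far_weight_ball bm) (far_weight_ball bm_y) subrr dvdz0.
have [[m mk bm]|dvdy] := far_weight_dvd_or_ball k y.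
  have bm_x : U m.+1 (b m, x) by apply: U_trans bm (U_sym (U_le mk xy)).
  by rewrite (far_weight_ball bm) (far_weight_ball bm_x) subrr dvdz0.
exact: rpredB.
Qed.

Variables (G : topologicalZmodType) (i : X -> G).

Definition far_partial_sum (n : nat) : G := \sum_(m < n) (i (b m) - i (a m)).

Lemma far_partial_sum_cauchy :
  nonarch_group G -> unif_cont_to_group i -> group_cauchy (far_partial_sum @ \oo).
Proof.
move=> [_ G_na] i_uc W /G_na [V [V_open V_sub] VW].
have V0 : V 0 by case: V_sub.
have [E E_ent EV] := i_uc V (open_nbhs_nbhs (conj V_open V0)).
have [n0 n0E] : exists n0, U n0 `<=` E by case: far => _ _ /(_ E E_ent).
have tail d : V (far_partial_sum (n0 + d) - far_partial_sum n0).
  elim: d => [|d IH]; first by rewrite addn0 subrr.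
  rewrite addnS /far_partial_sum big_ord_recr /= addrAC.
  apply: is_subgroupD => //; apply/EV/n0E/(U_le (leq_addr d n0)).
  by case: far.
exists (far_partial_sum @` [set n | (n0 <= n)%N]); first by exists n0 => // n; exists n.
move=> _ _ [M M_ge <-] [N N_ge <-]; apply: VW.
have -> : far_partial_sum N - far_partial_sum M =
    (far_partial_sum N - far_partial_sum n0) - (far_partial_sum M - far_partial_sum n0).
  by rewrite opprB addrA subrK.
rewrite -(subnKC M_ge) -(subnKC N_ge).
by case: V_sub => _; apply.
Qed.

End FarSequence.

Lemma far_sequence_not_complete (X : uniformType) (U : nat -> set (X * X))
    (a b : nat -> X) (G : topologicalZmodType) (i : X -> G) :
  far_sequence U a b -> is_free_NA_group i -> ~ group_complete G.
Proof.
move=> far [G_na i_uc free] G_complete.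
have [g [[g_cont gD g_i] _]] :=
  free _ _ (padic_nonarch (isT : 1 < 3)%N) (far_weight_uniform (p := 3) far).
have [L sL] := G_complete _ _ (far_partial_sum_cauchy far G_na i_uc).
apply: (padic_geometric_sum_not_cvg (L := g L) (isT : 2 < 3)%N).
suff -> : (fun n => \sum_(m < n) 3%:Z ^+ m : padic_int 3) = g \o far_partial_sum a b i.
  exact: continuous_cvg (g_cont L) sL.
apply: funext => n /=; rewrite /far_partial_sum (big_morph g gD (additive_fun0 gD)).
apply: eq_bigr => m _.
by rewrite additive_funB // !g_i (far_weight_b far) (far_weight_a far) subr0.
Qed.

Lemma dependent_choice_inv (S A : Type) (Inv : S -> Prop)
    (R : nat -> S -> A -> S -> Prop) (s0 : S) :
  Inv s0 -> (forall n s, Inv s -> exists a s', Inv s' /\ R n s a s') ->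
  exists (u : nat -> S) (v : nat -> A),
    (forall n, Inv (u n)) /\ forall n, R n (u n) (v n) (u n.+1).
Proof.
move=> inv0 step.
have /choice [F FR] : forall ns : nat * {s | Inv s},
    exists q : A * {s | Inv s}, R ns.1 (sval ns.2) q.1 (sval q.2).
  move=> [n [s inv_s]]; have [a [s' [inv_s' R_s']]] := step n s inv_s.
  by exists (a, exist _ s' inv_s').
pose w := fix w n : {s | Inv s} :=
  if n is m.+1 then (F (m, w m)).2 else exist _ s0 inv0.
exists (fun n => sval (w n)), (fun n => (F (n, w n)).1); split => n.
  exact: svalP.
exact: FR (n, w n).
Qed.

Lemma hausdorff_entourage_sep (X : uniformType) (x y : X) :
  hausdorff_space X -> x <> y -> exists2 E, entourage E & ~ E (x, y).
Proof.
move=> X_T2 xy; apply: contrapT => no_sep; apply/xy/(close_eq X_T2).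
rewrite entourage_close => E E_ent; apply: contrapT => nE.
by apply: no_sep; exists E.
Qed.

Section FarSequenceExistence.
Variables (X : uniformType) (e : nat -> set (X * X)).
Hypotheses (X_na : nonarch_uniform X) (e_ent : forall n, entourage (e n))
  (e_base : forall E, entourage E -> exists n, e n `<=` E).

Definition equiv_entourage (V : set (X * X)) := entourage V /\ equiv_rel_set V.

Lemma equiv_entourage_sub (E : set (X * X)) n :
  entourage E -> exists F, [/\ equiv_entourage F, F `<=` E & F `<=` e n].
Proof.
move=> E_ent; have [F [F_ent F_eq] FE] := X_na (filterI E_ent (e_ent n)).
by exists F; split=> [//|z /FE []|z /FE []].
Qed.

Lemma shrinking_equiv_entourages (A : Type)
    (P : nat -> set (X * X) -> A -> set (X * X) -> Prop) :
  (forall n V, equiv_entourage V -> exists x V',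
     [/\ equiv_entourage V', V' `<=` V, V' `<=` e n & P n V x V']) ->
  exists (U : nat -> set (X * X)) (v : nat -> A),
    [/\ forall n, equiv_entourage (U n), forall n, U n.+1 `<=` U n,
        forall E, entourage E -> exists n, U n `<=` E &
        forall n, P n (U n) (v n) (U n.+1)].
Proof.
move=> step.
have setT_equiv : equiv_entourage setT by split; [exact: entourageT | split].
have [|U [v [U_equiv U_step]]] := dependent_choice_inv
  (R := fun n V x V' => [/\ V' `<=` V, V' `<=` e n & P n V x V']) setT_equiv.
  by move=> n V /(step n) [x [V' [? ? ? ?]]]; exists x, V'.
exists U, v; split => // [n|E /e_base [n en]|n]; first by case: (U_step n).
  by exists n.+1 => z; case: (U_step n) => _ Ue _ /Ue /en.
by case: (U_step n).
Qed.

Lemma far_sequence_of_cluster_point (c : X) : hausdorff_space X ->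
  (forall E, entourage E -> exists2 y, y <> c & E (c, y)) ->
  exists (U : nat -> set (X * X)) (a b : nat -> X), far_sequence U a b.
Proof.
move=> X_T2 c_cluster.
have [|U [b [U_equiv U_decr U_base U_b]]] := shrinking_equiv_entourages
  (P := fun n V y V' => V (c, y) /\ ~ V' (c, y)).
  move=> n V [V_ent _]; have [y yc Vy] := c_cluster V V_ent.
  have [S S_ent nS] := hausdorff_entourage_sep X_T2 (nesym yc).
  have [F [F_eq FVS Fe]] := equiv_entourage_sub n (filterI V_ent S_ent).
  by exists y, F; split => // [z /FVS []|] //; split => // /FVS [].
exists U, (fun=> c), b; split => // [n|j m]; first by case: (U_b n).
have [_ U_sym _] := (U_equiv m.+1).2.
by move=> /U_sym; case: (U_b m).
Qed.

Lemma far_sequence_of_isolated_points :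
  (forall c : X, exists2 E, entourage E & forall y, E (c, y) -> y = c) ->
  ~ discrete_uniform X ->
  exists (U : nat -> set (X * X)) (a b : nat -> X), far_sequence U a b.
Proof.
move=> isolated X_ndisc.
have distinct_pair (E : set (X * X)) : entourage E -> exists x y, x <> y /\ E (x, y).
  move=> E_ent; apply: contrapT => no_pair; apply: X_ndisc.
  apply: (filterS _ E_ent) => -[x y] Exy.
  by apply: contrapT => xy; apply: no_pair; exists x, y.
have [|U [ab [U_equiv U_decr U_base U_ab]]] := shrinking_equiv_entourages
  (P := fun n V (xy : X * X) V' => [/\ V (xy.1, xy.2), xy.1 <> xy.2,
     forall z, V' (xy.1, z) -> z = xy.1 & forall z, V' (xy.2, z) -> z = xy.2]).
  move=> n V [V_ent _]; have [x [y [xy Vxy]]] := distinct_pair V V_ent.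
  have [Sx Sx_ent Sx_iso] := isolated x; have [Sy Sy_ent Sy_iso] := isolated y.
  have [F [F_eq FVS Fe]] :=
    equiv_entourage_sub n (filterI V_ent (filterI Sx_ent Sy_ent)).
  exists (x, y), F; split => //; first by move=> z /FVS [].
  by split => // z /FVS [_ []] // => [/Sx_iso|_ /Sy_iso].
have U_le := decreasing_sets_le U_decr.
have U_sym n x y : U n (x, y) -> U n (y, x).
  by have [_ sym _] := (U_equiv n).2; apply: sym.
exists U, (fun n => (ab n).1), (fun n => (ab n).2).
split => // [n|j m /=]; first by case: (U_ab n).
have [Um_ab am_bm a_iso_m b_iso_m] := U_ab m.
have [Uj_ab aj_bj a_iso_j _] := U_ab j.
move=> /b_iso_m aj_bm; case: (ltngtP j m) => [jm|mj|jm].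
- have := U_le _ _ jm _ Um_ab; rewrite -aj_bm => /U_sym /a_iso_j am_aj.
  by apply: am_bm; rewrite am_aj.
- have := U_le _ _ mj _ Uj_ab; rewrite aj_bm => /b_iso_m bj_bm.
  by apply: aj_bj; rewrite aj_bm bj_bm.
- by apply: am_bm; rewrite -{1}jm.
Qed.

End FarSequenceExistence.

Theorem theorem4p21 (X : uniformType) (G : topologicalZmodType) (i : X -> G) :
  nonarch_uniform X -> metrizable_uniform X -> ~ discrete_uniform X ->
  is_free_NA_group i -> ~ group_complete G.
Proof.
move=> X_na [X_T2 X_countable] X_ndisc free.
have [e e_base e_ent] := countable_uniformityP.1 X_countable.
have [U [a [b far]]] : exists (U : nat -> set (X * X)) (a b : nat -> X),
    far_sequence U a b.
  have [[c c_cluster]|no_cluster] := pselect (exists c : X,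
      forall E : set (X * X), entourage E -> exists2 y, y <> c & E (c, y)).
    exact: (@far_sequence_of_cluster_point X e X_na e_ent e_base c X_T2 c_cluster).
  apply: far_sequence_of_isolated_points X_na e_ent e_base _ X_ndisc => c.
  apply: contrapT => c_not_isolated; apply: no_cluster; exists c => E E_ent.
  apply: contrapT => no_y; apply: c_not_isolated; exists E => // y Ey.
  by apply: contrapT => yc; apply: no_y; exists y.
exact: far_sequence_not_complete far free.
Qed.
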